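(* Let $(X,d,\mu)$ be an unbounded space of homogeneous type with geometric constants $\tau\geq1$ and $A\geq1$. Let $\mathcal{K}$ be a family of symmetric Markov kernels on $X$ such that there exist $0<\gamma<\tfrac1\tau$ and $H\geq1$ with $\mathcal{K}\subset\mathcal{H}(\gamma,H)$. Then there is a constant $C$ depending only on $\tau,A,\gamma,H$ such that \[\mathcal{K}^*f(x)\leq C\,Mf(x)\] for every $x\in X$ and every measurable function $f$, where $\mathcal{K}^*f(x)=\sup_{K\in\mathcal{K}}\left|\int_XK(x,y)f(y)\,d\mu(y)\right|$ and $Mf(x)=\sup_{B\ni x}\mu(B)^{-1}\int_B|f|\,d\mu$, the supremum being over all $d$-balls $B$ containing $x$.
   Context: A quasi-distance on a set $X$ is a nonnegative symmetric function $d$ on $X\times X$ vanishing exactly on the diagonal with $d(x,z)\leq\tau[d(x,y)+d(y,z)]$ for all $x,y,z$ and some $\tau\geq1$. Balls are $B(x,r)=\{y:d(x,y)<r\}$. $(X,d,\mu)$ is a space of homogeneous type if $\mu$ is a positive measure on a $\sigma$-algebra containing all $d$-balls with $0<\mu(B(x,2r))\leq A\mu(B(x,r))<\infty$ for all $x\in X$, $r>0$ and some $A\geq1$; $\tau$ and $A$ are its geometric constants. Unbounded means $\mu(X)=+\infty$. A symmetric Markov kernel on $X$ is a nonnegative, symmetric, measurable $K$ on $X\times X$ with $\int_XK(x,y)\,d\mu(y)=1$ for every $x$. $K\in\mathcal{H}(\gamma,H)$ means $\sup_{\eta\in B(y,\gamma d(x,y))}K(x,\eta)\leq H\inf_{\eta\in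 B(y,\gamma d(x,y))}K(x,\eta)$ for all $x,y\in X$ with $y\neq x$. *)

From HB Require Import structures.
From mathcomp Require Import all_boot all_order all_algebra.
From mathcomp Require Import all_classical all_reals all_analysis.
Set Implicit Arguments. Unset Strict Implicit. Unset Printing Implicit Defensive.
Import Order.TTheory GRing.Theory Num.Theory.
Local Open Scope classical_set_scope.
Local Open Scope ring_scope.

Section Defs.
Context {R : realType} {T : Type}.

Definition qd_dball (dist : T -> T -> R) (x : T) (r : R) : set T :=
  [set y | dist x y < r].

Definition qd_quasi_distance (dist : T -> T -> R) (tau : R) : Prop :=
  [/\ forall x y, 0 <= dist x y,
      forall x y, dist x y = dist y x,
      forall x y, dist x y = 0 <-> x = y &
      forall x y z, dist x z <= tau * (dist x y + dist y z)].
End Defs.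

Definition qd_homogeneous_type {R : realType} {d : measure_display}
  (X : measurableType d) (dist : X -> X -> R)
  (mu : {measure set X -> \bar R}) (tau A : R) : Prop :=
  [/\ 1 <= tau, 1 <= A, qd_quasi_distance dist tau,
      forall x r, measurable (qd_dball dist x r) &
      forall x r, 0 < r ->
        (0 < mu (qd_dball dist x (2 * r)))%E /\
        (mu (qd_dball dist x (2 * r)) <= A%:E * mu (qd_dball dist x r))%E /\
        (mu (qd_dball dist x r) < +oo)%E].

Definition qd_symmetric_Markov_kernel {R : realType} {d : measure_display}
  (X : measurableType d) (mu : {measure set X -> \bar R}) (K : X -> X -> R) : Prop :=
  [/\ forall x y, 0 <= K x y,
      forall x y, K x y = K y x,
      measurable_fun setT (fun p : X * X => K p.1 p.2) &
      forall x, (\int[mu]_y (K x y)%:E = 1)%E].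

Definition qd_in_H_class {R : realType} {T : Type} (dist : T -> T -> R)
  (gamma H : R) (K : T -> T -> R) : Prop :=
  forall x y, y <> x ->
    (ereal_sup [set (K x eta)%:E | eta in qd_dball dist y (gamma * dist x y)]
     <= H%:E * ereal_inf [set (K x eta)%:E | eta in qd_dball dist y (gamma * dist x y)])%E.

Definition qd_maximal_kernel_op {R : realType} {d : measure_display}
  (X : measurableType d) (mu : {measure set X -> \bar R})
  (family : set (X -> X -> R)) (f : X -> R) (x : X) : \bar R :=
  ereal_sup [set `| \int[mu]_y (K x y * f y)%:E |%E | K in family].

(* Hardy-Littlewood maximal function: sup over d-balls B containing x of
   mu(B)^-1 int_B |f| dmu  (mu(B) is finite and positive in a space of
   homogeneous type, so it is inverted as a real number) *)
Definition qd_HL_maximal {R : realType} {d : measure_display}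
  (X : measurableType d) (dist : X -> X -> R) (mu : {measure set X -> \bar R})
  (f : X -> R) (x : X) : \bar R :=
  ereal_sup [set v | exists z r, 0 < r /\ qd_dball dist z r x /\
     (v = ((fine (mu (qd_dball dist z r)))^-1)%:E *
         \int[mu]_(y in qd_dball dist z r) `|f y|%:E)%E].

From HB Require Import structures.
From mathcomp Require Import all_boot all_order all_algebra.
From mathcomp Require Import all_classical all_reals all_analysis.
From mathcomp Require Import lra zify measurable_realfun.
Import Order.TTheory GRing.Theory Num.Theory.
Local Open Scope classical_set_scope.
Local Open Scope ring_scope.

(* Fix x and a kernel K of the family, and cut X \ {x} into the annuli
   A_k = {y | lam^k <= d(x,y) < lam^(k+1)}, k in Z, with
   lam = tau (1 + gamma) / (1 - tau gamma).  This choice of lam makes the Harnack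
   ball B(y, gamma d(x,y)) of a point y of A_k lie in A_(k-1) u A_k u A_(k+1), while
   its 2^M-fold dilate covers B(x, lam^(k+1)) once 2^M gamma >= tau (1 + lam).
   Averaging the Harnack inequality over that ball and doubling M times gives
   K(x,y) mu(B(x, lam^(k+1))) <= A^M H m_k, where m_k is the K(x,.)-mass of the three
   annuli; hence the integral of K(x,.)|f| over A_k is at most A^M H m_k Mf(x), and
   sum_k m_k <= 3 because K(x,.) has total mass 1.  A possible atom at x costs at
   most 2 Mf(x): K(x,x) mu{x} <= 1, and small balls around x have measure at most
   2 mu{x}.  So C = 3 A^M H + 2 works. *)

Definition int_of_nat (n : nat) : int :=
  if odd n then - (n./2)%:Z - 1 else (n./2)%:Z.

Lemma int_of_nat_inj : injective int_of_nat.
Proof.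
move=> n m; rewrite /int_of_nat.
have := odd_double_half n; have := odd_double_half m; rewrite -!mul2n.
by case: (odd n); case: (odd m) => /= hm hn; lia.
Qed.

Lemma int_of_nat_surj (k : int) : exists n, int_of_nat n = k.
Proof.
case: k => m; first by exists m.*2; rewrite /int_of_nat odd_double doubleK.
exists m.*2.+1; rewrite /int_of_nat /= odd_double /= uphalf_double NegzE; lia.
Qed.

Definition annulus_ratio {R : realType} (tau gamma : R) : R :=
  tau * (1 + gamma) / (1 - tau * gamma).

Definition annulus_radius {R : realType} (tau gamma : R) (k : int) : R :=
  expR (k%:~R * ln (annulus_ratio tau gamma)).

Definition annulus {R : realType} {T : Type} (dist : T -> T -> R) (tau gamma : R)
    (x : T) (k : int) : set T :=
  qd_dball dist x (annulus_radius tau gamma (k + 1))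
  `\` qd_dball dist x (annulus_radius tau gamma k).

Definition annulus_nbhd {R : realType} {T : Type} (dist : T -> T -> R)
    (tau gamma : R) (x : T) (k : int) : set T :=
  let A := annulus dist tau gamma x in A (k - 1) `|` A k `|` A (k + 1).

Section AnnulusRadius.
Context {R : realType} {tau gamma : R}.
Hypotheses (tau_ge1 : 1 <= tau) (gamma_gt0 : 0 < gamma).
Hypothesis tau_gamma_lt1 : tau * gamma < 1.
Local Notation lam := (annulus_ratio tau gamma).
Local Notation rad := (annulus_radius tau gamma).

Lemma annulus_ratioE : lam * (1 - tau * gamma) = tau * (1 + gamma).
Proof. by rewrite /annulus_ratio divfK // subr_eq0 eq_sym lt_eqF. Qed.

Lemma annulus_ratio_ge : tau * (1 + gamma) <= lam.
Proof.
have tg0 : 0 < tau * gamma by rewrite mulr_gt0 // (lt_le_trans ltr01).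
have t0 : 0 < tau * (1 + gamma) by rewrite mulr_gt0 ?addr_gt0 // (lt_le_trans ltr01).
by rewrite /annulus_ratio ler_pdivlMr ?subr_gt0 // ger_pMr // gerBl ltW.
Qed.

Lemma annulus_ratio_gt1 : 1 < lam.
Proof.
have h : 1 < tau * (1 + gamma).
  by rewrite mulrDr mulr1 -[1]addr0 ler_ltD // mulr_gt0 // (lt_le_trans ltr01).
exact: lt_le_trans h annulus_ratio_ge.
Qed.

Lemma annulus_radius_gt0 k : 0 < rad k. Proof. exact: expR_gt0. Qed.

Lemma annulus_radius_lt p q : (rad p < rad q) = (p < q).
Proof.
by rewrite ltr_expR ltr_pM2r ?ltr_int // ln_gt0 // annulus_ratio_gt1.
Qed.

Lemma annulus_radiusS k : rad (k + 1) = rad k * lam.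
Proof.
rewrite /annulus_radius intrD mulrDl mul1r expRD lnK //.
by rewrite posrE (lt_trans ltr01 annulus_ratio_gt1).
Qed.

Lemma annulus_radius_cover a : 0 < a -> exists k, rad k <= a < rad (k + 1).
Proof.
move=> a0; have l0 : 0 < ln lam by rewrite ln_gt0 // annulus_ratio_gt1.
exists (Num.floor (ln a / ln lam)).
rewrite /annulus_radius -[X in _ <= X < _](lnK a0) ler_expR ltr_expR.
rewrite -ler_pdivlMr // -ltr_pdivrMr // floor_le /=.
by rewrite -floor_lt_int ltrDl.
Qed.

End AnnulusRadius.

Section QuasiDistance.
Context {R : realType} {T : Type} {dist : T -> T -> R} {tau : R}.
Hypothesis qd : qd_quasi_distance dist tau.
Local Notation B := (qd_dball dist).

Lemma qd_ge0 x y : 0 <= dist x y. Proof. by case: qd. Qed.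

Lemma qd_sym x y : dist x y = dist y x. Proof. by case: qd. Qed.

Lemma qd_xx x : dist x x = 0. Proof. by case: qd => _ _ /(_ x x) [_ ->]. Qed.

Lemma qd_gt0 x y : y <> x -> 0 < dist x y.
Proof.
move=> yx; rewrite lt0r qd_ge0 andbT; apply/eqP => dxy.
by case: qd => _ _ /(_ x y) [/(_ dxy) xy _] _; exact: yx.
Qed.

Lemma qd_triangle x y z : dist x z <= tau * (dist x y + dist y z).
Proof. by case: qd. Qed.

Lemma dball_center x r : 0 < r -> B x r x.
Proof. by rewrite /qd_dball /= qd_xx. Qed.

Lemma dball_sub x r s : r <= s -> B x r `<=` B x s.
Proof. by move=> rs y /lt_le_trans; apply. Qed.

Lemma bigcap_dball x : \bigcap_n B x n.+1%:R^-1 = [set x].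
Proof.
apply/seteqP; split => [y Bxy|_ -> n _]; last exact: dball_center.
apply: contrapT => /qd_gt0 dxy.
set n := Num.Def.archi_bound (dist x y)^-1.
have nxy : 1 < dist x y * n%:R.
  by rewrite -ltr_pdivrMl // mulr1 archi_boundP // ltW // invr_gt0.
have := Bxy n I; rewrite /qd_dball /= -[X in _ < X]div1r ltr_pdivlMr //.
by rewrite -addn1 natrD; nra.
Qed.

Context {gamma : R}.
Hypotheses (tau_ge1 : 1 <= tau) (gamma_gt0 : 0 < gamma).
Hypothesis tau_gamma_lt1 : tau * gamma < 1.
Local Notation lam := (annulus_ratio tau gamma).
Local Notation rad := (annulus_radius tau gamma).
Local Notation Ann := (annulus dist tau gamma).
Local Notation lam_gt1 := (annulus_ratio_gt1 tau_ge1 gamma_gt0 tau_gamma_lt1).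
Local Notation rad_lt := (annulus_radius_lt tau_ge1 gamma_gt0 tau_gamma_lt1).
Local Notation radS := (annulus_radiusS tau_ge1 gamma_gt0 tau_gamma_lt1).

Lemma in_annulus x k y : Ann x k y <-> rad k <= dist x y < rad (k + 1).
Proof.
rewrite /annulus /qd_dball /=; split => [[hi /negP lo]|/andP[lo hi]].
  by rewrite hi andbT leNgt.
by split => //; apply/negP; rewrite -leNgt.
Qed.

Lemma annulus_uniq x p q y : Ann x p y -> Ann x q y -> p = q.
Proof.
move=> /in_annulus/andP[lp hp] /in_annulus/andP[lq hq].
have := le_lt_trans lp hq; have := le_lt_trans lq hp.
by rewrite !rad_lt !ltzD1 => qp pq; apply/le_anti/andP.
Qed.

Lemma center_notin_annulus x k : ~ Ann x k x.
Proof.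
by move/in_annulus; rewrite qd_xx leNgt annulus_radius_gt0.
Qed.

Lemma annulus_cover x : [set x] `|` \bigcup_n Ann x (int_of_nat n) = setT.
Proof.
apply/seteqP; split => // y _.
have [->|/qd_gt0 dxy] := pselect (y = x); first by left.
have [k hk] := annulus_radius_cover tau_ge1 gamma_gt0 tau_gamma_lt1 _ dxy.
have [n nk] := int_of_nat_surj k.
by right; exists n => //; apply/in_annulus; rewrite nk.
Qed.

Lemma dist_harnack_ball x y e k : Ann x k y -> dist y e < gamma * dist x y ->
  rad (k - 1) <= dist x e < rad (k + 2).
Proof.
move=> /in_annulus/andP[lo hi] ye.
have t0 : 0 < tau := lt_le_trans ltr01 tau_ge1.
have lam_ge := annulus_ratio_ge tau_ge1 gamma_gt0 tau_gamma_lt1.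
apply/andP; split.
- have h1 : (1 - tau * gamma) * dist x y < tau * dist x e.
    have := qd_triangle x e y; rewrite (qd_sym e y) mulrDr.
    have : tau * dist y e < tau * gamma * dist x y by rewrite -mulrA ltr_pM2l.
    lra.
  have h2 : tau * rad (k - 1) <= (1 - tau * gamma) * rad k.
    have := radS (k - 1); rewrite subrK => ->.
    rewrite [_ * (_ * lam)]mulrCA [(1 - _) * lam]mulrC (annulus_ratioE tau_gamma_lt1).
    rewrite mulrC ler_pM2l ?annulus_radius_gt0 //.
    by rewrite ler_peMr ?(ltW t0) // lerDl ltW.
  have h3 : (1 - tau * gamma) * rad k <= (1 - tau * gamma) * dist x y.
    by rewrite ler_wpM2l // subr_ge0 ltW.
  by rewrite -(ler_pM2l t0) ltW // (le_lt_trans h2 (le_lt_trans h3 h1)).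
- have h1 : dist x e < tau * (1 + gamma) * dist x y.
    apply: (le_lt_trans (qd_triangle x y e)).
    by rewrite -mulrA ltr_pM2l // mulrDl mul1r ltrD2l.
  have -> : k + 2 = k + 1 + 1 by rewrite -addrA.
  apply: (lt_le_trans h1); rewrite radS mulrC.
  by rewrite ler_pM ?qd_ge0 ?(ltW hi) // mulr_ge0 ?addr_ge0 ?(ltW t0) ?(ltW gamma_gt0).
Qed.

Lemma harnack_ball_sub_annulus_nbhd x y k : Ann x k y ->
  B y (gamma * dist x y) `<=` annulus_nbhd dist tau gamma x k.
Proof.
move=> yk e /(dist_harnack_ball _ _ _ _ yk) /andP[lo hi].
case: (ltP (dist x e) (rad k)) => h1.
  by left; left; apply/in_annulus; rewrite subrK lo h1.
case: (ltP (dist x e) (rad (k + 1))) => h2.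
  by left; right; apply/in_annulus; rewrite h1 h2.
by right; apply/in_annulus; rewrite h2 -addrA.
Qed.

Lemma annulus_dball_sub_dilated x y k c : Ann x k y ->
  tau * (1 + lam) <= c * gamma ->
  B x (rad (k + 1)) `<=` B y (c * (gamma * dist x y)).
Proof.
move=> /in_annulus/andP[lo hi] hc z; rewrite /qd_dball /= => xz.
have t0 : 0 < tau := lt_le_trans ltr01 tau_ge1.
have dxy : 0 < dist x y := lt_le_trans (annulus_radius_gt0 _) lo.
have lam0 : 0 < lam := lt_trans ltr01 lam_gt1.
have h1 : dist x z < lam * dist x y.
  by apply: (lt_le_trans xz); rewrite radS mulrC ler_pM2l.
apply: (le_lt_trans (qd_triangle y x z)); rewrite (qd_sym y x) mulrA.
apply: (lt_le_trans _ (ler_wpM2r (ltW dxy) hc)).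
by rewrite -mulrA ltr_pM2l // mulrDl mul1r ltrD2l.
Qed.

End QuasiDistance.

Section HomogeneousType.
Context {R : realType} {d : measure_display} {X : measurableType d}.
Context {dist : X -> X -> R} {mu : {measure set X -> \bar R}} {tau A : R}.
Hypothesis hom : qd_homogeneous_type dist mu tau A.
Local Notation B := (qd_dball dist).
Local Notation Mf := (qd_HL_maximal dist mu).

Lemma hom_qd : qd_quasi_distance dist tau. Proof. by case: hom. Qed.

Lemma measurable_dball z r : measurable (B z r). Proof. by case: hom. Qed.

Lemma mu_dball_EFin z r : 0 < r -> exists2 V, mu (B z r) = V%:E & 0 < V.
Proof.
move=> r0; case: hom => _ _ _ _ dbl.
have [_ [_ muB_fin]] := dbl z r r0.
have [muB_gt0 _] := dbl z (r / 2) (divr_gt0 r0 (ltr0Sn _ 1)).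
rewrite mulrC divfK ?pnatr_eq0 // in muB_gt0.
have muB_num : mu (B z r) \is a fin_num by rewrite ge0_fin_numE.
by exists (fine (mu (B z r))); rewrite ?fineK // -lte_fin fineK.
Qed.

Lemma mu_dball_dilate z r n : 0 < r ->
  (mu (B z (2 ^+ n * r)) <= (A ^+ n)%:E * mu (B z r))%E.
Proof.
case: hom => _ A_ge1 _ _ dbl r0; elim: n => [|n IHn].
  by rewrite !expr0 mul1r mul1e.
have [_ [dbl_n _]] := dbl z (2 ^+ n * r) (mulr_gt0 (exprn_gt0 _ (ltr0Sn _ 1)) r0).
rewrite exprS -mulrA; apply: (le_trans dbl_n).
rewrite exprS EFinM -muleA lee_wpmul2l // lee_fin.
exact: le_trans ler01 A_ge1.
Qed.

Lemma HL_maximal_ge0 f x : (0 <= Mf f x)%E.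
Proof.
have [V muV V0] := mu_dball_EFin x 1 ltr01.
apply: le_ereal_sup_tmp.
exists ((V^-1)%:E * \int[mu]_(y in B x 1) `|f y|%:E)%E.
  by exists x, 1; rewrite muV; do 2!split => //; exact: (dball_center hom_qd).
by rewrite mule_ge0 ?lee_fin ?invr_ge0 ?(ltW V0) // integral_ge0.
Qed.

Lemma integral_dball_le_HL_maximal f x z r : 0 < r -> B z r x ->
  (\int[mu]_(y in B z r) `|f y|%:E <= mu (B z r) * Mf f x)%E.
Proof.
move=> r0 Bzx; have [V muV V0] := mu_dball_EFin z r r0; rewrite muV.
have avg_le : ((V^-1)%:E * \int[mu]_(y in B z r) `|f y|%:E <= Mf f x)%E.
  by apply: ereal_sup_ubound; exists z, r; rewrite muV.
rewrite -[X in (X <= _)%E]mul1e -(mulfV (lt0r_neq0 V0)) EFinM -muleA.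
by rewrite lee_wpmul2l // lee_fin ltW.
Qed.

Lemma hom_measurable_set1 (x : X) : measurable [set x].
Proof.
rewrite -(bigcap_dball hom_qd x).
by apply: bigcapT_measurable => n; exact: measurable_dball.
Qed.

Lemma atom_mu_dball_le x s t : mu [set x] = s%:E -> s < t ->
  exists2 rho, 0 < rho & (mu (B x rho) <= t%:E)%E.
Proof.
move=> mux st.
pose F n := B x n.+1%:R^-1.
have cvF : mu (F n) @[n --> \oo] --> mu [set x].
  rewrite -(bigcap_dball hom_qd x); apply: nonincreasing_cvg_mu.
  - by rewrite /F /= invr1; have [V -> _] := mu_dball_EFin x 1 ltr01; exact: ltry.
  - by move=> n; exact: measurable_dball.
  - by apply: bigcapT_measurable => n; exact: measurable_dball.
  - move=> m n mn; rewrite subsetEset; apply: dball_sub.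
    by rewrite lef_pV2 ?posrE // ler_nat.
apply: contrapT => /forall2NP noball.
have : (t%:E <= mu [set x])%E.
  apply: (cvge_to_ge cvF); apply: nearW => n.
  have [|/negP] := noball n.+1%:R^-1; first by rewrite invr_gt0.
  by rewrite -ltNge => /ltW.
by rewrite mux lee_fin leNgt st.
Qed.

End HomogeneousType.

Section KernelAnnuli.
Context {R : realType} {d : measure_display} {X : measurableType d}.
Context {dist : X -> X -> R} {mu : {measure set X -> \bar R}} {tau A gamma H : R}.
Hypothesis hom : qd_homogeneous_type dist mu tau A.
Hypotheses (gamma_gt0 : 0 < gamma) (tau_gamma_lt1 : tau * gamma < 1).
Hypothesis H_ge0 : 0 <= H.
Variable K : X -> X -> R.
Hypothesis K_markov : qd_symmetric_Markov_kernel mu K.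
Hypothesis K_harnack : qd_in_H_class dist gamma H K.
Variable x : X.
Local Notation B := (qd_dball dist).
Local Notation Mf := (qd_HL_maximal dist mu).
Local Notation lam := (annulus_ratio tau gamma).
Local Notation rad := (annulus_radius tau gamma).
Local Notation Ann := (annulus dist tau gamma x).
Local Notation N := (annulus_nbhd dist tau gamma x).

Let qd := hom_qd hom.
Let tau_ge1 : 1 <= tau. Proof. by case: hom. Qed.

Lemma measurable_annulus k : measurable (Ann k).
Proof. exact: measurableD (measurable_dball hom _ _) (measurable_dball hom _ _). Qed.

Lemma measurable_annulus_nbhd k : measurable (N k).
Proof. by rewrite /annulus_nbhd; do 2?apply: measurableU; exact: measurable_annulus. Qed.

Lemma kernel_ge0 y : 0 <= K x y. Proof. by case: K_markov. Qed.

Lemma measurable_kernel_row : measurable_fun setT (K x).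
Proof. by case: K_markov => _ _ mK _; exact: measurableT_comp mK (pair1_measurable x). Qed.

Lemma measurable_kernel_rowE (D : set X) : measurable_fun D (fun y => (K x y)%:E).
Proof. by apply/measurable_EFinP; apply: measurable_funS measurable_kernel_row. Qed.

Lemma integral_kernel_le1 (D : set X) : measurable D ->
  (\int[mu]_(y in D) (K x y)%:E <= 1)%E.
Proof.
case: K_markov => _ _ _ /(_ x) <- mD; apply: ge0_subset_integral => //.
- exact: measurable_kernel_rowE.
- by move=> y _; rewrite lee_fin kernel_ge0.
Qed.

Lemma integral_kernel_EFin (D : set X) : measurable D ->
  exists2 m, (\int[mu]_(y in D) (K x y)%:E)%E = m%:E & 0 <= m.
Proof.
move=> mD; have I1 := integral_kernel_le1 _ mD.
have I0 : (0 <= \int[mu]_(y in D) (K x y)%:E)%E.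
  by apply: integral_ge0 => y _; rewrite lee_fin kernel_ge0.
have Inum : (\int[mu]_(y in D) (K x y)%:E)%E \is a fin_num.
  by rewrite ge0_fin_numE // (le_lt_trans I1) ?ltry.
by exists (fine (\int[mu]_(y in D) (K x y)%:E)%E); rewrite ?fineK // fine_ge0.
Qed.

Lemma kernel_harnack y e : y <> x -> B y (gamma * dist x y) e -> K x y <= H * K x e.
Proof.
move=> yx ye; rewrite -lee_fin EFinM; apply: le_trans (le_trans (K_harnack _ _ yx) _).
  apply: ereal_sup_ubound; exists y => //.
  exact: dball_center qd _ _ (mulr_gt0 gamma_gt0 (qd_gt0 qd _ _ yx)).
by rewrite lee_wpmul2l ?lee_fin //; apply: ereal_inf_lbound; exists e.
Qed.

Lemma kernel_mu_dball_le y k M : Ann k y -> tau * (1 + lam) <= 2 ^+ M * gamma ->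
  ((K x y)%:E * mu (B x (rad (k + 1))) <=
   (A ^+ M * H)%:E * \int[mu]_(e in N k) (K x e)%:E)%E.
Proof.
move=> yk hM.
have yx : y <> x by move=> yx; move: yk; rewrite yx; exact: center_notin_annulus.
have r0 : 0 < gamma * dist x y := mulr_gt0 gamma_gt0 (qd_gt0 qd _ _ yx).
set By := B y (gamma * dist x y).
have mBy : measurable By := measurable_dball hom _ _.
have avg : ((K x y)%:E * mu By <= H%:E * \int[mu]_(e in N k) (K x e)%:E)%E.
  rewrite -integral_cst //.
  apply: (@le_trans _ _ (\int[mu]_(e in By) (H%:E * (K x e)%:E))%E).
    apply: ge0_le_integral => //; first by move=> e _; rewrite lee_fin kernel_ge0.
      exact: emeasurable_funM (measurable_cst _) (measurable_kernel_rowE _).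
    by move=> e ye; rewrite -EFinM lee_fin kernel_harnack.
  rewrite ge0_integralZl_EFin //; last 2 first.
  - by move=> e _; rewrite lee_fin kernel_ge0.
  - exact: measurable_kernel_rowE.
  rewrite lee_wpmul2l ?lee_fin //; apply: ge0_subset_integral => //.
  - exact: measurable_annulus_nbhd.
  - exact: measurable_kernel_rowE.
  - by move=> e _; rewrite lee_fin kernel_ge0.
  - exact (harnack_ball_sub_annulus_nbhd qd tau_ge1 gamma_gt0 tau_gamma_lt1 x y k yk).
have dilate : (mu (B x (rad (k + 1))) <= (A ^+ M)%:E * mu By)%E.
  apply: le_trans (mu_dball_dilate hom _ _ _ r0).
  apply: le_measure; rewrite ?inE; try exact: measurable_dball hom _ _.
  exact: (annulus_dball_sub_dilated qd tau_ge1 gamma_gt0 tau_gamma_lt1 x y k _ yk hM).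
have A_ge0 : 0 <= A ^+ M by rewrite exprn_ge0 // (le_trans ler01) //; case: hom.
apply: (@le_trans _ _ ((K x y)%:E * ((A ^+ M)%:E * mu By)))%E.
  by rewrite lee_wpmul2l // lee_fin kernel_ge0.
by rewrite muleCA EFinM -muleA lee_wpmul2l // lee_fin.
Qed.

Variable f : X -> R.
Hypothesis f_meas : measurable_fun setT f.

Lemma measurable_abs_fE (D : set X) : measurable_fun D (fun y => `|f y|%:E).
Proof.
apply/measurable_EFinP.
by apply: measurable_funS (measurableT_comp (@normr_measurable _ _) f_meas).
Qed.

Lemma measurable_kernel_abs_fE (D : set X) :
  measurable_fun D (fun y => (K x y * `|f y|)%:E).
Proof.
apply/measurable_EFinP; apply: measurable_funS (measurable_funM measurable_kernel_row _) => //.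
exact: measurableT_comp (@normr_measurable _ _) f_meas.
Qed.

Lemma integral_annulus_le k M M0 : Mf f x = M0%:E ->
  tau * (1 + lam) <= 2 ^+ M * gamma ->
  (\int[mu]_(y in Ann k) (K x y * `|f y|)%:E <=
   (A ^+ M * H * M0)%:E * \int[mu]_(e in N k) (K x e)%:E)%E.
Proof.
move=> MfE hM.
have rad0 : 0 < rad (k + 1) := annulus_radius_gt0 _.
have [V muV V0] := mu_dball_EFin hom x _ rad0.
have [m Im m0] := integral_kernel_EFin _ (measurable_annulus_nbhd k).
have A_ge0 : 0 <= A ^+ M by rewrite exprn_ge0 // (le_trans ler01) //; case: hom.
set c := A ^+ M * H * m / V.
have K_le y : Ann k y -> K x y <= c.
  move=> yk; rewrite ler_pdivlMr //.
  by have := kernel_mu_dball_le _ _ _ yk hM; rewrite muV Im -!EFinM lee_fin.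
apply: (@le_trans _ _ (\int[mu]_(y in Ann k) (c%:E * `|f y|%:E))%E).
  apply: ge0_le_integral => //; first exact: measurable_annulus.
  - by move=> y _; rewrite lee_fin mulr_ge0 ?kernel_ge0.
  - exact: measurable_kernel_abs_fE.
  - exact: emeasurable_funM (measurable_cst _) (measurable_abs_fE _).
  - by move=> y yk; rewrite -EFinM lee_fin ler_wpM2r ?K_le.
have c0 : 0 <= c by rewrite divr_ge0 ?(ltW V0) // !mulr_ge0.
rewrite ge0_integralZl_EFin //; last 2 first.
- exact: measurable_annulus.
- exact: measurable_abs_fE.
apply: (@le_trans _ _ (c%:E * (V%:E * M0%:E)))%E; last first.
  by rewrite Im -!EFinM lee_fin /c mulrA divfK ?lt0r_neq0 // mulrAC.
rewrite lee_wpmul2l ?lee_fin //.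
rewrite -muV -MfE; apply: le_trans
  (integral_dball_le_HL_maximal hom f x x _ rad0 (dball_center qd _ _ rad0)).
apply: ge0_subset_integral => //; first exact: measurable_annulus.
- exact: measurable_dball hom _ _.
- exact: measurable_abs_fE.
- by move=> y [].
Qed.

Lemma integral_atom_le M0 : Mf f x = M0%:E ->
  (\int[mu]_(y in [set x]) (K x y * `|f y|)%:E <= (2 * M0)%:E)%E.
Proof.
move=> MfE; have M0_ge0 : 0 <= M0 by rewrite -lee_fin -MfE (HL_maximal_ge0 hom).
have mx := hom_measurable_set1 hom x.
have integral_set1 (g : X -> R) :
    (\int[mu]_(y in [set x]) (g y)%:E = (g x)%:E * mu [set x])%E.
  by rewrite -integral_cst //; apply: eq_integral => y /[!inE] ->.
have [s mux s0] : exists2 s, mu [set x] = s%:E & 0 <= s.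
  have [V muV _] := mu_dball_EFin hom x _ ltr01.
  have mux_fin : mu [set x] \is a fin_num.
    rewrite ge0_fin_numE // (le_lt_trans _ (ltry V)) // -muV.
    apply: le_measure; rewrite ?inE //; first exact: measurable_dball hom _ _.
    by move=> _ ->; exact: (dball_center qd _ _ ltr01).
  by exists (fine (mu [set x])); rewrite ?fineK // fine_ge0.
rewrite integral_set1 mux -EFinM lee_fin.
have [->|s_neq0] := eqVneq s 0; first by rewrite mulr0 mulr_ge0.
have s_gt0 : 0 < s by rewrite lt0r s_neq0.
have s2 : s < 2 * s by lra.
have [rho rho0 mu_rho] := atom_mu_dball_le hom _ _ _ mux s2.
have [V muV V0] := mu_dball_EFin hom x _ rho0.
have Ks : K x x * s <= 1.
  by have := integral_kernel_le1 _ mx; rewrite integral_set1 mux -EFinM lee_fin.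
have fs : `|f x| * s <= V * M0.
  rewrite -lee_fin EFinM -mux -(integral_set1 (fun y => `|f y|)) EFinM -muV -MfE.
  apply: le_trans (integral_dball_le_HL_maximal hom f x x _ rho0 (dball_center qd _ _ rho0)).
  apply: ge0_subset_integral => //; first exact: measurable_dball hom _ _.
  - exact: measurable_abs_fE.
  - by move=> _ ->; exact: (dball_center qd _ _ rho0).
have V2s : V <= 2 * s by rewrite -lee_fin -muV.
have : K x x * (`|f x| * s) <= K x x * (2 * s * M0).
  by rewrite ler_wpM2l ?kernel_ge0 // (le_trans fs) // ler_wpM2r.
have : K x x * s * (2 * M0) <= 2 * M0 by rewrite ler_piMl ?mulr_ge0.
lra.
Qed.

Lemma annulus_trivIset (g : nat -> int) : injective g ->
  trivIset setT (fun n => Ann (g n)).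
Proof.
move=> g_inj m n _ _ [y [ym yn]].
exact/g_inj/(annulus_uniq tau_ge1 gamma_gt0 tau_gamma_lt1 _ _ _ _ ym yn).
Qed.

Lemma sum_integral_kernel_annulus_le1 j :
  (\sum_(0 <= n <oo) \int[mu]_(y in Ann (int_of_nat n + j)) (K x y)%:E <= 1)%E.
Proof.
rewrite -ge0_integral_bigcup //.
- by apply: integral_kernel_le1; apply: bigcup_measurable => n _; exact: measurable_annulus.
- by move=> n; exact: measurable_annulus.
- exact: measurable_kernel_rowE.
- by move=> y _; rewrite lee_fin kernel_ge0.
- by apply: annulus_trivIset => m n /addIr /int_of_nat_inj.
Qed.

Lemma integral_kernel_annulus_nbhd k : (\int[mu]_(e in N k) (K x e)%:E =
  \int[mu]_(e in Ann (k - 1)) (K x e)%:E + \int[mu]_(e in Ann k) (K x e)%:E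
  + \int[mu]_(e in Ann (k + 1)) (K x e)%:E)%E.
Proof.
have ann_uniq p q y : Ann p y -> Ann q y -> p = q :=
  annulus_uniq tau_ge1 gamma_gt0 tau_gamma_lt1 x p q y.
rewrite /annulus_nbhd /= !ge0_integral_setU //.
all: try exact: measurable_kernel_rowE.
all: try by move=> e _; rewrite lee_fin kernel_ge0.
all: try by do ?apply: measurableU; exact: measurable_annulus.
- by apply/disj_setPS => y [/ann_uniq yk /yk]; lia.
- by apply/disj_setPS => y [[/ann_uniq yk|/ann_uniq yk] /yk]; lia.
Qed.

Lemma sum_integral_kernel_annulus_nbhd_le3 :
  (\sum_(0 <= n <oo) \int[mu]_(e in N (int_of_nat n)) (K x e)%:E <= 3%:E)%E.
Proof.
have I0 (D : set X) : (0 <= \int[mu]_(e in D) (K x e)%:E)%E.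
  by apply: integral_ge0 => e _; rewrite lee_fin kernel_ge0.
under eq_eseriesr => n _ do rewrite integral_kernel_annulus_nbhd.
rewrite nneseriesD; last 2 first.
- by move=> n _ _; exact: adde_ge0.
- by move=> n _ _; exact: I0.
rewrite nneseriesD; last 2 first.
- by move=> n _ _; exact: I0.
- by move=> n _ _; exact: I0.
apply: (@le_trans _ _ (1 + 1 + 1)%E); last by rewrite -!EFinD lee_fin; lra.
apply: leeD; first apply: leeD.
- exact: (sum_integral_kernel_annulus_le1 (- 1)).
- under eq_eseriesr => n _ do rewrite -[int_of_nat n]addr0.
  exact: sum_integral_kernel_annulus_le1.
- exact: sum_integral_kernel_annulus_le1.
Qed.

Lemma integral_kernel_abs_le M : tau * (1 + lam) <= 2 ^+ M * gamma ->
  (\int[mu]_y (K x y * `|f y|)%:E <= (3 * (A ^+ M * H) + 2)%:E * Mf f x)%E.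
Proof.
move=> hM.
have AH_ge0 : 0 <= A ^+ M * H.
  by rewrite mulr_ge0 // exprn_ge0 // (le_trans ler01) //; case: hom.
have C_gt0 : 0 < 3 * (A ^+ M * H) + 2 by lra.
have := HL_maximal_ge0 hom f x; case MfE : (Mf f x) => [M0| |] // M0_ge0.
  2: by rewrite mulry gtr0_sg // mul1e leey.
rewrite lee_fin in M0_ge0.
rewrite -(annulus_cover qd tau_ge1 gamma_gt0 tau_gamma_lt1 x).
rewrite ge0_integral_setU ?ge0_integral_bigcup //; first last.
all: try by move=> y _; rewrite lee_fin mulr_ge0 ?kernel_ge0.
all: try exact: measurable_kernel_abs_fE.
all: try by move=> n; exact: measurable_annulus.
- by apply/disj_setPS => _ [-> [n _ xn]]; exact: (center_notin_annulus qd x _ xn).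
- by apply: bigcup_measurable => n _; exact: measurable_annulus.
- exact: hom_measurable_set1 hom x.
- exact: annulus_trivIset int_of_nat_inj.
apply: (@le_trans _ _ ((2 * M0)%:E + (A ^+ M * H * M0)%:E * 3%:E))%E.
  apply: leeD; first exact: integral_atom_le.
  apply: le_trans (lee_wpmul2l _ sum_integral_kernel_annulus_nbhd_le3).
    rewrite -nneseriesZl => [|n _]; last first.
      by apply: integral_ge0 => e _; rewrite lee_fin kernel_ge0.
    apply: lee_nneseries => [n _ _|n _].
      by apply: integral_ge0 => y _; rewrite lee_fin mulr_ge0 ?kernel_ge0.
    exact: integral_annulus_le.
  by rewrite lee_fin mulr_ge0.
by rewrite -EFinM -EFinD -EFinM lee_fin; lra.
Qed.

End KernelAnnuli.

Lemma exists_expr2_ge (R : archiRealFieldType) (c gamma : R) : 0 < gamma ->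
  exists M : nat, c <= 2 ^+ M * gamma.
Proof.
move=> gamma_gt0; set M := Num.Def.archi_bound (`|c| / gamma).
exists M; rewrite -ler_pdivrMr //.
have c_le : c / gamma <= `|c| / gamma by rewrite ler_pM2r ?invr_gt0 // ler_norm.
apply: (le_trans c_le); apply: (le_trans (ltW (archi_boundP _))).
  by rewrite divr_ge0 // ltW.
by rewrite -natrX ler_nat ltnW // ltn_expl.
Qed.

Theorem theorem4p1 (R : realType) (tau A gamma H : R) :
  1 <= tau -> 1 <= A -> 0 < gamma -> gamma < tau^-1 -> 1 <= H ->
  exists C : R,
  forall (d : measure_display) (X : measurableType d) (dist : X -> X -> R)
         (mu : {measure set X -> \bar R}),
    qd_homogeneous_type dist mu tau A ->
    mu setT = +oo%E ->
    forall family : set (X -> X -> R),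
    (forall K, family K -> qd_symmetric_Markov_kernel mu K /\ qd_in_H_class dist gamma H K) ->
    forall f : X -> R, measurable_fun setT f ->
    forall x : X,
      (qd_maximal_kernel_op mu family f x <= C%:E * qd_HL_maximal dist mu f x)%E.
Proof.
move=> tau_ge1 _ gamma_gt0 gamma_lt H_ge1.
have tau_gamma_lt1 : tau * gamma < 1.
  have tau_gt0 : 0 < tau := lt_le_trans ltr01 tau_ge1.
  by rewrite -(mulfV (lt0r_neq0 tau_gt0)) ltr_pM2l.
have [M hM] := exists_expr2_ge _ (tau * (1 + annulus_ratio tau gamma)) _ gamma_gt0.
exists (3 * (A ^+ M * H) + 2) => d X dist mu hom _ family family_ok f f_meas x.
apply: ge_ereal_sup => _ [K /family_ok [K_markov K_harnack] <-].
have Kf_meas : measurable_fun setT (fun y => (K x y * f y)%:E).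
  apply/measurable_EFinP; apply: measurable_funM => //.
  exact: measurable_kernel_row _ K_markov x.
apply: le_trans (le_abse_integral _ _ Kf_meas) _ => //.
have -> : (\int[mu]_(y in setT) `|(K x y * f y)%:E| = \int[mu]_y (K x y * `|f y|)%:E)%E.
  by apply: eq_integral => y _; rewrite /= normrM ger0_norm // (kernel_ge0 _ K_markov).
exact: (integral_kernel_abs_le hom gamma_gt0 tau_gamma_lt1 (le_trans ler01 H_ge1)
  _ K_markov K_harnack x _ f_meas _ hM).
Qed.
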